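(* Let $G$ be a cactus. Then the sparing number of $G$ is $r$, where $r$ is the number of odd cycles in $G$.
   Context: A cactus is a connected graph in which any two simple cycles have at most one vertex in common; equivalently, every block is a simple cycle or a single edge. Let $\mathbb{N}_0$ be the set of non-negative integers; for $A,B\subseteq\mathbb{N}_0$, $A+B=\{a+b:a\in A,b\in B\}$. An integer additive set-indexer (IASI) of a graph $G$ is an injective map $f:V(G)\to\mathcal{P}(\mathbb{N}_0)$ such that $f^+:E(G)\to\mathcal{P}(\mathbb{N}_0)$, $f^+(uv)=f(u)+f(v)$, is injective. A weak IASI is an IASI with $|f^+(uv)|=\max(|f(u)|,|f(v)|)$ for every edge $uv$. An edge $e$ is mono-indexed if $|f^+(e)|=1$. The sparing number $\varphi(G)$ is the minimum number of mono-indexed edges over all weak IASIs of $G$. *)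

From Stdlib Require Import ClassicalEpsilon.
From mathcomp Require Import all_boot.
From mathcomp Require Import finmap.
Set Implicit Arguments. Unset Strict Implicit. Unset Printing Implicit Defensive.
Local Open Scope fset_scope.

Definition decP (P : Prop) : bool :=
  if excluded_middle_informative P then true else false.

Section Graphs.
Variables (T : finType) (e : rel T).

Definition simple_graph : Prop := symmetric e /\ irreflexive e.

Definition connected_graph : Prop := forall x y : T, connect e x y.

Definition edges : {set {set T}} :=
  [set [set x; y] | x in T, y in T & e x y].

Definition simple_cycle (p : seq T) : Prop :=
  [/\ 3 <= size p, uniq p & cycle e p].

(* the cycle as a subgraph, identified with its edge set *)
Definition cycle_edges (p : seq T) : {set {set T}} :=
  [set [set x; next p x] | x in p].

Definition cycle_vertices (p : seq T) : {set T} := [set x in p].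

Definition cactus : Prop :=
  connected_graph /\
  forall p q : seq T, simple_cycle p -> simple_cycle q ->
    cycle_edges p != cycle_edges q ->
    #|cycle_vertices p :&: cycle_vertices q| <= 1.

Definition num_odd_cycles : nat :=
  #|[set C : {set {set T}} |
      decP (exists p, [/\ simple_cycle p, odd (size p) & C = cycle_edges p])]|.

Definition sumset (A B : {fset nat}) : {fset nat} :=
  [fset (a + b)%N | a in A, b in B].

Definition IASI (f : T -> {fset nat}) : Prop :=
  injective f /\
  forall x y u v, e x y -> e u v -> sumset (f x) (f y) = sumset (f u) (f v) ->
    [set x; y] = [set u; v].

Definition weak_IASI (f : T -> {fset nat}) : Prop :=
  IASI f /\
  forall x y, e x y -> #|` sumset (f x) (f y)| = maxn #|` f x| #|` f y|.

Definition mono_indexed_edges (f : T -> {fset nat}) : {set {set T}} :=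
  [set [set x; y] | x in T, y in T & e x y && (#|` sumset (f x) (f y)| == 1)].

Definition is_sparing_number (k : nat) : Prop :=
  (exists f, weak_IASI f /\ #|mono_indexed_edges f| = k) /\
  (forall f, weak_IASI f -> k <= #|mono_indexed_edges f|).

End Graphs.

From Pilot Require Import Defs.
From Stdlib Require Import ClassicalEpsilon.
From mathcomp Require Import all_boot finmap zify.
Set Implicit Arguments. Unset Strict Implicit. Unset Printing Implicit Defensive.

(* In a weak IASI, |f x + f y| = max (|f x|, |f y|) on an edge xy forces one endpoint to carry a
   singleton label, and the edge is mono-indexed exactly when both do.  The singleton labels cannot
   alternate around an odd cycle, so every odd cycle carries a mono-indexed edge; distinct cycles of
   a cactus share no edge, hence at least r edges are mono-indexed.
   Conversely, a set c of vertices covering every edge, whose edges inside c are exactly one per odd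
   cycle, is built by deleting edges one at a time: a bridge is put back by gluing sets chosen on
   its two sides with opposite membership at its ends, and a cycle edge by noting that membership
   alternates along the rest of its cycle.  Labelling the vertex of index k by {2^k} when it is in c
   and by {2^k, 2^k + 1} otherwise gives a weak IASI with exactly r mono-indexed edges. *)

Lemma decPP (P : Prop) : reflect P (Defs.decP P).
Proof. by rewrite /Defs.decP; case: excluded_middle_informative => h; constructor. Qed.

Lemma card_le_rel (X Y : finType) (A : {set X}) (B : {set Y}) (R : X -> Y -> Prop) :
  (forall a, a \in A -> exists2 b, b \in B & R a b) ->
  (forall a a' b, a \in A -> a' \in A -> b \in B -> R a b -> R a' b -> a = a') ->
  #|A| <= #|B|.
Proof.
move=> totR injR; pose g a := [pick b in B | Defs.decP (R a b)].
have gA a : a \in A -> exists2 b, g a = Some b & (b \in B) /\ R a b.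
  move=> aA; rewrite /g; case: pickP => [b /andP[bB /decPP Rab] | none].
    by exists b.
  by have [b bB /decPP Rab] := totR a aA; have := none b; rewrite bB Rab.
have g_inj : {in A &, injective g}.
  move=> a a' aA a'A; have [b -> [bB Rab]] := gA a aA.
  have [b' -> [_ Ra'b']] := gA a' a'A.
  by case=> Ebb'; apply: injR aA a'A bB Rab _; rewrite Ebb'.
rewrite -(card_in_imset g_inj) -(card_imset B (@Some_inj _)).
apply/subset_leq_card/subsetP => _ /imsetP[a aA ->].
by have [b -> [bB _]] := gA a aA; apply: imset_f.
Qed.

Section Sumset.
Local Open Scope fset_scope.
Implicit Types A B : {fset nat}.

Lemma sumsetP A B k :
  reflect (exists2 a, a \in A & exists2 b, b \in B & k = (a + b)%N) (k \in sumset A B).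
Proof. exact: (iffP (imfset2P _ _ _ _ _)). Qed.

Lemma sumsetC A B : sumset A B = sumset B A.
Proof.
apply/fsetP => k; apply/sumsetP/sumsetP => -[a aA [b bB ->]];
  by exists b => //; exists a => //; rewrite addnC.
Qed.

Lemma sumset0 B : sumset fset0 B = fset0.
Proof. by apply/fsetP => k; rewrite inE; apply/sumsetP => -[a]; rewrite inE. Qed.

Lemma sumset1 a b : sumset [fset a] [fset b] = [fset (a + b)%N].
Proof.
apply/fsetP => k; apply/sumsetP/fset1P => [[_ /fset1P-> [_ /fset1P-> ->]] // | ->].
by exists a; rewrite ?inE //; exists b; rewrite ?inE.
Qed.

Lemma sumset1_shift a b : sumset [fset a] [fset b; b.+1] = [fset (a + b)%N; (a + b).+1].
Proof.
apply/fsetP => k; apply/sumsetP/idP => [[_ /fset1P-> [y]] | ].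
  by rewrite !inE => /orP[]/eqP-> ->; rewrite ?addnS eqxx ?orbT.
rewrite !inE => /orP[]/eqP->; exists a; rewrite ?inE //.
  by exists b; rewrite ?inE ?eqxx.
by exists b.+1; rewrite ?inE ?eqxx ?orbT ?addnS.
Qed.

Lemma sumset_card_gtl A B : 0 < #|` A| -> 1 < #|` B| -> #|` A| < #|` sumset A B|.
Proof.
move=> A_gt0 B_gt1.
have [a0 a0A] : exists a0, a0 \in A by apply/fset0Pn; rewrite -cardfs_gt0.
have ubA x : x \in A -> x <= \max_(i <- A) i by move=> xA; apply: leq_bigmax_seq.
case: (ex_maxnP (ex_intro (fun x => x \in A) a0 a0A) ubA) => a aA amax.
have [b1 [b2 [b1B b2B lt12]]] : exists b1 b2, [/\ b1 \in B, b2 \in B & b1 < b2].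
  have [b bB] : exists b, b \in B by apply/fset0Pn; rewrite -cardfs_gt0 ltnW.
  have [b' /fsetD1P[b'b b'B]] : exists b', b' \in B `\ b.
    by apply/fset0Pn; rewrite -cardfs_gt0; move: B_gt1; rewrite (cardfsD1 b B) bB.
  by move: b'b; rewrite neq_ltn => /orP[] lt; [exists b', b | exists b, b'].
pose X := [fset (x + b1)%N | x in A].
have cardX : #|` X| = #|` A| by rewrite card_in_imfset //= => x y _ _ /addIn.
have abX : (a + b2)%N \notin X.
  apply/imfsetP => -[x /= xA E].
  by have := leq_add (amax x xA) lt12; rewrite addnS E ltnn.
have sub : (a + b2)%N |` X `<=` sumset A B.
  apply/fsubsetP => k /fset1UP[-> | /imfsetP[x /= xA ->]]; apply/sumsetP.
    by exists a => //; exists b2.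
  by exists x => //; exists b1.
by have := fsubset_leq_card sub; rewrite cardfsU1 abX cardX.
Qed.

Lemma sumset_card_gt A B : 1 < #|` A| -> 1 < #|` B| ->
  maxn #|` A| #|` B| < #|` sumset A B|.
Proof.
move=> A_gt1 B_gt1; rewrite gtn_max sumset_card_gtl ?(ltnW A_gt1) //=.
by rewrite sumsetC sumset_card_gtl ?(ltnW B_gt1).
Qed.

End Sumset.

Lemma logn2_add_pow2 a b : a < b -> logn 2 (2 ^ a + 2 ^ b) = a.
Proof.
move=> ab; have -> : 2 ^ a + 2 ^ b = 2 ^ a * (2 ^ (b - a)).+1.
  by rewrite mulnS -expnD subnKC ?(ltnW ab) // addnC.
rewrite lognM ?expn_gt0 // pfactorK // logn_coprime ?addn0 //.
by rewrite prime_coprime // -[(2 ^ _).+1]addn1 dvdn_addr // dvdn_exp // subn_gt0.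
Qed.

Lemma add_pow2_inj a b c d : a < b -> c < d ->
  2 ^ a + 2 ^ b = 2 ^ c + 2 ^ d -> a = c /\ b = d.
Proof.
move=> ab cd E; have ac : a = c by rewrite -(logn2_add_pow2 ab) -(logn2_add_pow2 cd) E.
by subst c; split=> //; move/addnI: E; apply: expnI.
Qed.

Section CycleParity.
Variable T : eqType.
Implicit Types (P : pred T) (p s : seq T).

Lemma path_parity (f : T -> T) P x s : path (frel f) x s ->
  odd (count (fun z => P z != P (f z)) (belast x s)) = (P x != P (last x s)).
Proof.
elim: s x => [|y s IH] x /=; first by rewrite eqxx.
case/andP => /eqP fx /IH IHs; rewrite oddD IHs fx oddb.
by case: (P x); case: (P y); case: (P (last y s)).
Qed.

Lemma cycle_parity P p : uniq p -> ~~ odd (count (fun z => P z != P (next p z)) p).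
Proof.
case: p => [|x q] // Up; have := path_parity P (cycle_next Up).
by rewrite belast_rcons last_rcons eqxx => ->.
Qed.

Lemma cycle_parity_rem P p u : uniq p -> u \in p ->
  (P u != P (next p u)) = odd (count (fun z => P z != P (next p z)) (rem u p)).
Proof.
move=> Up up; have := cycle_parity P Up.
rewrite (permP (perm_to_rem up)) /= oddD oddb.
by case: (_ != _); case: (odd _).
Qed.

Lemma cycle_alternating_except P p u : uniq p -> u \in p ->
    {in p, forall z, z != u -> P z != P (next p z)} ->
  (P u != P (next p u)) = ~~ odd (size p).
Proof.
move=> Up up alt; rewrite (cycle_parity_rem P Up up).
have -> : count (fun z => P z != P (next p z)) (rem u p) = size (rem u p).
  apply/eqP; rewrite -all_count; apply/allP => z.
  by rewrite (mem_rem_uniq _ Up) => /andP[zu zp]; apply: alt.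
by rewrite size_rem //; case: p up {Up alt} => //= x p _; rewrite negbK.
Qed.

Lemma cycle_const_except P p u : uniq p -> u \in p ->
  {in p, forall z, z != u -> P z = P (next p z)} -> P u = P (next p u).
Proof.
move=> Up up const; apply/eqP/negPn; rewrite (cycle_parity_rem P Up up).
rewrite (@eq_in_count _ _ pred0) ?count_pred0 // => z.
by rewrite (mem_rem_uniq _ Up) => /andP[zu zp]; rewrite /= const ?eqxx.
Qed.

Lemma path_frel_const (f : T -> T) P x s : path (frel f) x s ->
  {in belast x s, forall z, P z = P (f z)} -> {in x :: s, forall z, P z = P x}.
Proof.
elim: s x => [|y s IH] x /=; first by move=> _ _ z; rewrite inE => /eqP->.
case/andP => /eqP fx /IH IHs const z; rewrite inE => /orP[/eqP->//|zs].
rewrite (const x) ?mem_head // fx; apply: IHs zs => t ts.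
by apply: const; rewrite inE ts orbT.
Qed.

Lemma cycle_const P p : uniq p -> {in p, forall z, P z = P (next p z)} ->
  {in p &, forall y z, P y = P z}.
Proof.
case: p => [|x q] // Up const; have := path_frel_const (P := P) (cycle_next Up).
rewrite belast_rcons => /(_ const) Px y z yp zp.
have mem_rc t : t \in x :: q -> t \in x :: rcons q x.
  by rewrite !inE mem_rcons inE; case: (t == x).
by rewrite (Px y) ?(Px z) ?mem_rc.
Qed.

Lemma next_next_neq p z : uniq p -> 2 < size p -> z \in p -> next p (next p z) != z.
Proof.
move=> Up sp zp; case: (rot_to zp) => i s E.
have Us : uniq (z :: s) by rewrite -E rot_uniq.
have ss : 2 < size (z :: s) by rewrite -E size_rot.
rewrite -!(next_rot i Up) E.
case: s Us ss {E} => [|y [|a t]] //= Us _.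
move: Us; rewrite !inE !negb_or => /andP[/andP[zy /andP[za _]] _].
by rewrite eqxx (eq_sym y z) (negbTE zy) eqxx eq_sym.
Qed.

Lemma next_neq p z : uniq p -> 2 < size p -> z \in p -> next p z != z.
Proof. by move=> Up sp zp; apply: contraNneq (next_next_neq Up sp zp) => E; rewrite !E. Qed.

End CycleParity.

Section Graphs.
Variable T : finType.
Implicit Types (e : rel T) (c : pred T) (p C : seq T).

Lemma set2_eqP (a b u v : T) :
  [set a; b] = [set u; v] -> (a = u /\ b = v) \/ (a = v /\ b = u).
Proof.
move=> E; have aE : a \in [set u; v] by rewrite -E set21.
have bE : b \in [set u; v] by rewrite -E set22.
have uE : u \in [set a; b] by rewrite E set21.
have vE : v \in [set a; b] by rewrite E set22.
by case/set2P: aE bE uE vE => -> /set2P[]-> /set2P[]? /set2P[]?; subst; auto.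
Qed.

Lemma subset2 c (x y : T) : ([set x; y] \subset c) = c x && c y.
Proof.
apply/subsetP/andP => [sub | [cx cy] z /set2P[]-> //].
by split; apply: sub; rewrite !inE eqxx ?orbT.
Qed.

Lemma cycle_edge_inj p : uniq p -> 2 < size p ->
  {in p &, forall a b, [set a; next p a] = [set b; next p b] -> a = b}.
Proof.
move=> Up sp a b ap bp /set2_eqP[[]//|[anb nab]].
by have := next_next_neq Up sp bp; rewrite -anb nab eqxx.
Qed.

Lemma cycle_edgesP p E :
  reflect (exists2 z, z \in p & E = [set z; next p z]) (E \in cycle_edges p).
Proof. exact: imsetP. Qed.

Lemma cycle_edge_mem p z a : z \in p -> a \in [set z; next p z] -> a \in p.
Proof. by move=> zp /set2P[]->; rewrite ?mem_next. Qed.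

Lemma simple_cycle_next e p z : simple_cycle e p -> z \in p -> e z (next p z).
Proof. by case=> _ _; apply: next_cycle. Qed.

Lemma simple_cycle_sub e e' p : subrel e e' -> simple_cycle e p -> simple_cycle e' p.
Proof. by move=> ee' [sp Up cp]; split=> //; apply: sub_cycle cp. Qed.

Definition remove_edge e u v : rel T :=
  [rel a b | e a b && ([set a; b] != [set u; v])].

Lemma remove_edge_sub e u v : subrel (remove_edge e u v) e.
Proof. by move=> a b /andP[]. Qed.

Lemma remove_edgeP e u v x y : e x y ->
  [set x; y] = [set u; v] \/ remove_edge e u v x y.
Proof. by move=> exy; rewrite /remove_edge /= exy; case: eqP; [left | right]. Qed.

Lemma remove_edge_symmetric e u v : symmetric e -> symmetric (remove_edge e u v).
Proof. by move=> sym a b; rewrite /remove_edge /= sym setUC. Qed.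

Lemma card_edges_remove_edge e u v : e u v -> #|edges (remove_edge e u v)| < #|edges e|.
Proof.
move=> euv; apply: proper_card; apply/properP; split.
  apply/subsetP => E /imset2P[x y _]; rewrite inE => /andP[_ /andP[exy _]] ->.
  by apply/imset2P; exists x y; rewrite ?inE ?exy.
exists [set u; v]; first by apply/imset2P; exists u v; rewrite ?inE ?euv.
by apply/negP => /imset2P[x y _]; rewrite inE => /andP[_ /andP[_ /eqP ne]] /esym.
Qed.

Lemma simple_cycle_remove_edge e u v C :
  simple_cycle (remove_edge e u v) C <->
  simple_cycle e C /\ [set u; v] \notin cycle_edges C.
Proof.
split=> [scC|[scC uvC]].
  split; first exact: simple_cycle_sub (@remove_edge_sub e u v) scC.
  apply/cycle_edgesP => -[z zC Ez].
  by have /andP[_] := simple_cycle_next scC zC; rewrite Ez eqxx.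
have [sC UC _] := scC; split=> //; apply: (cycle_from_next UC) => z zC.
rewrite /remove_edge /= (simple_cycle_next scC zC); apply: contraNneq uvC => <-.
by apply/cycle_edgesP; exists z.
Qed.

Definition cactus_cycles e : Prop :=
  forall p q, simple_cycle e p -> simple_cycle e q ->
    cycle_edges p != cycle_edges q ->
    #|cycle_vertices p :&: cycle_vertices q| <= 1.

Lemma cactus_cycles_sub e e' : subrel e' e -> cactus_cycles e -> cactus_cycles e'.
Proof.
by move=> e'e cac p q sp sq; apply: cac; [apply: simple_cycle_sub sp | apply: simple_cycle_sub sq].
Qed.

Lemma cactus_cycle_edges_eq e p q x y : cactus_cycles e ->
  simple_cycle e p -> simple_cycle e q -> x != y ->
  x \in p -> y \in p -> x \in q -> y \in q -> cycle_edges p = cycle_edges q.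
Proof.
move=> cac sp sq xy xp yp xq yq; apply/eqP/negPn/negP => /(cac _ _ sp sq).
have /subset_leq_card : [set x; y] \subset cycle_vertices p :&: cycle_vertices q.
  by rewrite subUset !sub1set !inE xp yp xq yq.
by rewrite cards2 xy => /leq_trans/[apply].
Qed.

Lemma cactus_cycle_edges_share e p q E : cactus_cycles e ->
  simple_cycle e p -> simple_cycle e q ->
  E \in cycle_edges p -> E \in cycle_edges q -> cycle_edges p = cycle_edges q.
Proof.
move=> cac sp sq /cycle_edgesP[z zp ->] /cycle_edgesP[z' z'q Ez].
have [sizep Up _] := sp.
apply: (cactus_cycle_edges_eq cac sp sq (x := z) (y := next p z)) => //.
- by rewrite eq_sym next_neq.
- by rewrite mem_next.
- by apply: (cycle_edge_mem z'q); rewrite -Ez set21.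
- by apply: (cycle_edge_mem z'q); rewrite -Ez set22.
Qed.

Lemma connect_sym_edge (r : rel T) x a b : symmetric r -> r a b -> connect r x a = connect r x b.
Proof.
move=> sym rab; have cs := sym_connect_sym sym.
by rewrite !(cs x) (same_connect cs (connect1 rab)).
Qed.

Definition odd_cycle e C : Prop := simple_cycle e C /\ odd (size C).

Lemma odd_cycle_sub e e' C : subrel e e' -> odd_cycle e C -> odd_cycle e' C.
Proof. by move=> ee' [sC oC]; split=> //; apply: simple_cycle_sub sC. Qed.

(* [c] marks the vertices that will be labelled by singletons. *)
Definition sparing_coloring e c : Prop :=
  [/\ forall x y, e x y -> c x || c y,
      (forall x y, e x y -> c x -> c y ->
         exists2 C, odd_cycle e C & [set x; y] \in cycle_edges C)
    & forall C, odd_cycle e C ->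
        {in cycle_edges C &, forall E E' : {set T}, E \subset c -> E' \subset c -> E = E'}].

Definition sparing_colorable e : Prop :=
  forall w b, exists2 c, sparing_coloring e c & c w = b.

Lemma cycle_edge_subset_eq C c c' E : {in C, c =1 c'} ->
  E \in cycle_edges C -> (E \subset c) = (E \subset c').
Proof. by move=> cc' /cycle_edgesP[z zC ->]; rewrite !subset2 !cc' ?mem_next. Qed.

Lemma sparing_coloring_edgeless e c : (forall x y, ~~ e x y) -> sparing_coloring e c.
Proof.
move=> noe; split=> [x y | x y | C [[sC _ cC] _]]; rewrite ?(negbTE (noe _ _)) //.
case: C sC cC => [|z C] // _ cC.
by have := next_cycle cC (mem_head z C); rewrite (negbTE (noe _ _)).
Qed.

Lemma sparing_coloring_eq e c c' : symmetric e ->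
  (forall x y, e x y -> c' x = c x) -> sparing_coloring e c -> sparing_coloring e c'.
Proof.
move=> sym cc' [cover odd_pair one_pair].
have cc'r x y : e x y -> c' y = c y by rewrite sym => /cc'.
split=> [x y exy | x y exy | C [sC oC] E E' EC E'C].
- by rewrite (cc' _ _ exy) (cc'r _ _ exy); apply: cover.
- by rewrite (cc' _ _ exy) (cc'r _ _ exy); apply: odd_pair.
have onC : {in C, c' =1 c} by move=> z zC; apply: cc' (simple_cycle_next sC zC).
rewrite !(cycle_edge_subset_eq onC) //; exact: one_pair (conj sC oC) E E' EC E'C.
Qed.

Section Extension.
Variable e : rel T.
Hypotheses (e_sym : symmetric e) (e_irr : irreflexive e) (e_cac : cactus_cycles e).

(* An edge of C0 other than uv with both ends in c would lie on an odd cycle avoiding uv; by the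
   cactus property that cycle has the edges of C0, uv included. *)
Lemma sparing_coloring_alternates C0 u c : simple_cycle e C0 -> u \in C0 ->
  sparing_coloring (remove_edge e u (next C0 u)) c ->
  {in C0, forall z, z != u -> c z != c (next C0 z)}.
Proof.
move=> sC0 uC0 [cover odd_pair _] z zC0 zu; have [size0 U0 _] := sC0.
have e'z : remove_edge e u (next C0 u) z (next C0 z).
  rewrite /remove_edge /= (simple_cycle_next sC0 zC0).
  by apply: contra_neq zu => /(cycle_edge_inj U0 size0 zC0 uC0).
have := cover _ _ e'z; case cz: (c z); case cnz: (c (next C0 z)) => //= _.
have [C sC' zC] := odd_pair _ _ e'z cz cnz.
case/simple_cycle_remove_edge: sC'.1 => sC /negP uvC; exfalso; apply: uvC.
have zC0' : [set z; next C0 z] \in cycle_edges C0 by apply/cycle_edgesP; exists z.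
by rewrite (cactus_cycle_edges_share e_cac sC sC0 zC zC0'); apply/cycle_edgesP; exists u.
Qed.

Lemma sparing_coloring_close_cycle C0 u c :
  simple_cycle e C0 -> u \in C0 ->
  sparing_coloring (remove_edge e u (next C0 u)) c ->
  (odd (size C0) -> c u || c (next C0 u)) -> sparing_coloring e c.
Proof.
move=> sC0 uC0 col odd_uv; have [cover odd_pair one_pair] := col.
set v := next C0 u in cover odd_pair one_pair odd_uv *.
set e' := remove_edge e u v in cover odd_pair one_pair *.
have [size0 U0 _] := sC0.
have uvC0 : [set u; v] \in cycle_edges C0 by apply/cycle_edgesP; exists u.
have alternate := sparing_coloring_alternates sC0 uC0 col.
have uv_parity := cycle_alternating_except U0 uC0 alternate.
have cover_uv : c u || c v.
  have [/odd_uv // | even0] := boolP (odd (size C0)).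
  by move: uv_parity; rewrite (negbTE even0); case: (c u); case: (c v).
split.
- move=> x y /(remove_edgeP u v) [E | /cover //].
  by case/set2_eqP: E => -[-> ->]; rewrite // orbC.
- move=> x y /(remove_edgeP u v) [E cx cy | e'xy cx cy].
    have /andP[cu cv] : c u && c v by case/set2_eqP: E => -[<- <-]; rewrite cx cy.
    exists C0; last by rewrite E.
    by split=> //; move: uv_parity; rewrite cu cv eqxx => /esym/negbFE.
  have [C oC xyC] := odd_pair _ _ e'xy cx cy.
  by exists C => //; apply: odd_cycle_sub oC; apply: remove_edge_sub.
move=> C [sC oC] E E' EC E'C.
have [EC0 | neC0] := eqVneq (cycle_edges C) (cycle_edges C0).
  have only_uv F : F \in cycle_edges C -> F \subset c -> F = [set u; v].
    rewrite EC0 => /cycle_edgesP[z zC0 ->]; rewrite subset2.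
    have [-> // | zu] := eqVneq z u.
    by case/andP => cz cnz; have := alternate z zC0 zu; rewrite cz cnz.
  by move=> /(only_uv E EC) -> /(only_uv E' E'C) ->.
apply: (one_pair C) => //; split=> //; apply/simple_cycle_remove_edge; split=> //.
apply/negP => uvC; case/eqP: neC0.
exact: cactus_cycle_edges_share e_cac sC sC0 uvC uvC0.
Qed.

Lemma cycle_edge_connect C u v : simple_cycle e C ->
  [set u; v] \in cycle_edges C -> connect (remove_edge e u v) u v.
Proof.
move=> sC /cycle_edgesP[z zC Ez]; have [sizeC UC _] := sC.
set e' := remove_edge e u v; apply/negPn/negP => nuv.
have e'_sym : symmetric e' by apply: remove_edge_symmetric.
have Kz : connect e' v z = connect e' v (next C z).
  apply: (cycle_const_except UC zC) => t tC tz; apply: connect_sym_edge => //.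
  rewrite /e' /remove_edge /= (simple_cycle_next sC tC) Ez.
  by apply: contra_neq tz => /(cycle_edge_inj UC sizeC tC zC).
have Ku : connect e' v u = false.
  by apply: contraNF nuv; rewrite (sym_connect_sym e'_sym).
by case/set2_eqP: Ez Kz => -[<- <-]; rewrite Ku connect0.
Qed.

Lemma sparing_coloring_bridge u v c1 c2 :
  ~~ connect (remove_edge e u v) u v ->
  sparing_coloring (remove_edge e u v) c1 -> sparing_coloring (remove_edge e u v) c2 ->
  c1 u != c2 v ->
  sparing_coloring e (fun z => if connect (remove_edge e u v) v z then c2 z else c1 z).
Proof.
move=> nuv [cover1 odd_pair1 one_pair1] [cover2 odd_pair2 one_pair2] c12.
set e' := remove_edge e u v in nuv cover1 odd_pair1 one_pair1 cover2 odd_pair2 one_pair2 *.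
set K := connect e' v; set c := fun z => if K z then c2 z else c1 z.
have e'_sym : symmetric e' by apply: remove_edge_symmetric.
have K_edge x y : e' x y -> K y = K x by move=> /(connect_sym_edge v e'_sym).
have Ku : K u = false by apply: contraNF nuv; rewrite /K (sym_connect_sym e'_sym).
have cuv : c u != c v by rewrite /c Ku /K connect0.
split.
- move=> x y /(remove_edgeP u v) [E | e'xy].
    by case/set2_eqP: E cuv => -[-> ->]; case: (c u); case: (c v).
  by rewrite /c (K_edge _ _ e'xy); case: (K x); [apply: cover2 | apply: cover1].
- move=> x y /(remove_edgeP u v) [E | e'xy].
    by case/set2_eqP: E cuv => -[-> ->]; case: (c u); case: (c v).
  rewrite /c (K_edge _ _ e'xy) => cx cy.
  have [C oC xyC] : exists2 C, odd_cycle e' C & [set x; y] \in cycle_edges C.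
    by move: cx cy; case: (K x); [apply: odd_pair2 | apply: odd_pair1].
  by exists C => //; apply: odd_cycle_sub oC; apply: remove_edge_sub.
move=> C [sC oC] E E' EC E'C; have [_ UC _] := sC.
have sC' : simple_cycle e' C.
  by apply/simple_cycle_remove_edge; split=> //; apply: contra nuv; apply: cycle_edge_connect.
case/cycle_edgesP: (EC) => z zC _.
have KC : {in C, forall y, K y = K z}.
  move=> y yC; apply: (cycle_const UC _ yC zC) => t tC.
  by rewrite (K_edge _ _ (simple_cycle_next sC' tC)).
have onC : {in C, c =1 if K z then c2 else c1}.
  by move=> y yC; rewrite /c KC //; case: (K z).
rewrite !(cycle_edge_subset_eq onC) //.
have oC' : odd_cycle e' C by [].
by case: (K z); [exact: one_pair2 oC' E E' EC E'C | exact: one_pair1 oC' E E' EC E'C].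
Qed.

Lemma connect_remove_edge_cycle w x : e w x -> connect (remove_edge e w x) w x ->
  exists2 C, simple_cycle e C & x \in C /\ next C x = w.
Proof.
move=> ewx /connectP[p pth lst]; case: (shortenP pth) lst => p' pth' Up' _ lst.
have wx : w != x by apply: contraTneq ewx => ->; rewrite e_irr.
have sizeC : 2 < size (w :: p').
  case: p' pth' lst {Up'} => [|y [|z t]] //=; first by move=> _ xw; rewrite xw eqxx in wx.
  by rewrite andbT => ewy xy; move: ewy; rewrite -xy /remove_edge /= eqxx andbF.
exists (w :: p').
  split=> //; rewrite /cycle rcons_path -lst e_sym ewx andbT.
  by apply: sub_path pth'; apply: remove_edge_sub.
split; first by rewrite lst mem_last.
by have := cycle_next Up'; rewrite /= rcons_path -lst => /andP[_ /eqP].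
Qed.

Hypothesis colorable_remove : forall u v, e u v -> sparing_colorable (remove_edge e u v).

Lemma sparing_coloring_cycle_edge C x b : simple_cycle e C -> x \in C ->
  exists2 c, sparing_coloring e c & c (next C x) = b.
Proof.
move=> sC xC; have [sizeC UC _] := sC; set w := next C x.
have [odd_b | ] := boolP (odd (size C) ==> b).
  have [c col cw] := colorable_remove (simple_cycle_next sC xC) w b.
  exists c => //; apply: (sparing_coloring_close_cycle sC xC col).
  by move=> oC; rewrite cw (implyP odd_b oC) orbT.
(* Forcing [c w = false] on an odd cycle: delete the edge [y x] before [x] instead; the surviving
   edge [w x] then puts [x] in [c]. *)
rewrite negb_imply => /andP[oC /negbTE ->].
set y := prev C x; have yC : y \in C by rewrite mem_prev.
have ny : next C y = x by rewrite next_prev.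
have wx : w != x by rewrite next_neq.
have yw : y != w.
  apply: contraNneq (next_next_neq UC sizeC xC) => yw.
  by rewrite -/w -yw ny.
have eyx : e y x by rewrite -[x in e _ x]ny; apply: simple_cycle_next sC yC.
have [c col cw] := colorable_remove eyx w false.
exists c => //; apply: (sparing_coloring_close_cycle sC yC); rewrite ny // => _.
have [cover _ _] := col; have e'wx : remove_edge e y x w x.
  rewrite /remove_edge /= e_sym (simple_cycle_next sC xC).
  apply/eqP => /set2_eqP[[wy _] | [wx' _]].
    by rewrite wy eqxx in yw.
  by rewrite wx' eqxx in wx.
by have := cover _ _ e'wx; rewrite cw /= => ->; rewrite orbT.
Qed.

Lemma sparing_coloring_at_edge w x b : e w x ->
  exists2 c, sparing_coloring e c & c w = b.
Proof.
move=> ewx; have [con | bridge] := boolP (connect (remove_edge e w x) w x).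
  have [C sC [xC <-]] := connect_remove_edge_cycle ewx con.
  exact: sparing_coloring_cycle_edge.
have [c1 col1 c1w] := colorable_remove ewx w b.
have [c2 col2 c2x] := colorable_remove ewx x (~~ b).
have c12 : c1 w != c2 x by rewrite c1w c2x; case: (b).
eexists; first exact: sparing_coloring_bridge bridge col1 col2 c12.
have e'_sym := remove_edge_symmetric w x e_sym.
by rewrite (sym_connect_sym e'_sym) (negbTE bridge).
Qed.

End Extension.

Lemma exists_sparing_coloring e : symmetric e -> irreflexive e -> cactus_cycles e ->
  sparing_colorable e.
Proof.
have [n] := ubnP #|edges e|; elim: n e => // n IHn e lt_e_n e_sym e_irr e_cac.
have colorable_remove u v : e u v -> sparing_colorable (remove_edge e u v).
  move=> euv; apply: IHn.
  - by have := card_edges_remove_edge euv; lia.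
  - exact: remove_edge_symmetric.
  - by move=> a; rewrite /remove_edge /= e_irr.
  - exact: cactus_cycles_sub (@remove_edge_sub e u v) e_cac.
move=> w b; case: (pickP (e w)) => [x ewx | w_isolated].
  exact: (sparing_coloring_at_edge e_sym e_irr e_cac colorable_remove b ewx).
have [c col] : exists c, sparing_coloring e c.
  case: (pickP (fun a => [exists x, e a x])) => [a /existsP[x eax] | edgeless].
    have [c col _] := sparing_coloring_at_edge e_sym e_irr e_cac colorable_remove true eax.
    by exists c.
  exists predT; apply: sparing_coloring_edgeless => x y.
  by apply/negP => exy; have /existsP[] := edgeless x; exists y.
exists (fun z => if z == w then b else c z); last by rewrite eqxx.
apply: sparing_coloring_eq col => // x y exy.
by case: eqP exy => // ->; rewrite w_isolated.
Qed.

End Graphs.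

Section Labelling.
Variable T : finType.
Implicit Types (e : rel T) (c : pred T) (x y u v z : T).
Local Open Scope fset_scope.

Lemma weak_IASI_edge_card e f x y : irreflexive e -> weak_IASI e f -> e x y ->
  [/\ 0 < #|` f x|, 0 < #|` f y| & #|` sumset (f x) (f y)| = maxn #|` f x| #|` f y|].
Proof.
move=> irr [[f_inj _] f_weak] exy; have Wxy := f_weak x y exy.
have xy : x != y by apply: contraTneq exy => ->; rewrite irr.
have fxy : f x != f y by apply: contra_neq xy => /f_inj.
rewrite !cardfs_gt0; split=> //; apply: contra_neq fxy => f0; move: Wxy.
- by rewrite f0 sumset0 cardfs0 max0n => /esym/cardfs0_eq ->.
- by rewrite f0 sumsetC sumset0 cardfs0 maxn0 => /esym/cardfs0_eq ->.
Qed.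

Lemma weak_IASI_edge_singleton e f x y : irreflexive e -> weak_IASI e f -> e x y ->
  (#|` f x| == 1) || (#|` f y| == 1).
Proof.
move=> irr wf exy; have [fx_gt0 fy_gt0 Wxy] := weak_IASI_edge_card irr wf exy.
case: (leqP #|` f x| 1) => [fx_le1 | fx_gt1]; first by apply/orP; left; apply/eqP; lia.
case: (leqP #|` f y| 1) => [fy_le1 | fy_gt1]; first by apply/orP; right; apply/eqP; lia.
by have := sumset_card_gt fx_gt1 fy_gt1; rewrite Wxy ltnn.
Qed.

Lemma weak_IASI_mono_edge e f x y : irreflexive e -> weak_IASI e f -> e x y ->
  (#|` sumset (f x) (f y)| == 1) = (#|` f x| == 1) && (#|` f y| == 1).
Proof.
move=> irr wf exy; have [fx_gt0 fy_gt0 ->] := weak_IASI_edge_card irr wf exy.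
by apply/eqP/andP => [? | [/eqP-> /eqP->]] //; split; apply/eqP; lia.
Qed.

Lemma num_odd_cycles_le_mono e f : irreflexive e -> cactus_cycles e -> weak_IASI e f ->
  num_odd_cycles e <= #|mono_indexed_edges e f|.
Proof.
move=> irr cac wf; rewrite /num_odd_cycles.
apply: (card_le_rel (R := fun (X : {set {set T}}) E => E \in X)); last first.
  move=> X X' E; rewrite !inE => /decPP[p [sp _ ->]] /decPP[q [sq _ ->]] _.
  exact: cactus_cycle_edges_share cac sp sq.
move=> X; rewrite inE => /decPP[p [sp op ->]]; have [sizep Up _] := sp.
pose S z := #|` f z| == 1.
have [/hasP[z zp /andP[Sz Snz]] | /hasPn no_mono] := boolP (has (fun z => S z && S (next p z)) p).
  exists [set z; next p z]; last by apply/cycle_edgesP; exists z.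
  have ez := simple_cycle_next sp zp.
  apply/imset2P; exists z (next p z); rewrite ?inE //= ez (weak_IASI_mono_edge irr wf ez).
  by apply/and3P; split.
have alternate : {in p, forall z, S z != S (next p z)}.
  move=> z zp; have := weak_IASI_edge_singleton irr wf (simple_cycle_next sp zp).
  by have := no_mono z zp; rewrite /S; case: (_ == 1); case: (_ == 1).
case: p sizep Up sp op alternate {no_mono} => [|z p] // _ Up _ op alternate.
have := cycle_alternating_except Up (mem_head z p) (fun t tp _ => alternate t tp).
by rewrite op alternate ?mem_head.
Qed.

Definition vertex_weight z : nat := 2 ^ enum_rank z.

Lemma vertex_weight_sum_inj x y u v : x != y -> u != v ->
  (vertex_weight x + vertex_weight y = vertex_weight u + vertex_weight v)%N ->
  [set x; y] = [set u; v].
Proof.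
have rank_neq (a b : T) : a != b -> (enum_rank a < enum_rank b) || (enum_rank b < enum_rank a).
  by rewrite -neq_ltn; apply: contra_neq => /val_inj/enum_rank_inj.
wlog xy : x y / enum_rank x < enum_rank y.
  move=> H x_y; case/orP: (rank_neq x y x_y) => lt; first exact: H.
  by rewrite setUC addnC; apply: H; rewrite // eq_sym.
wlog uv : u v / enum_rank u < enum_rank v.
  move=> H x_y u_v; case/orP: (rank_neq u v u_v) => lt; first exact: H.
  by rewrite [[set u; v]]setUC [(_ + vertex_weight v)%N]addnC; apply: H; rewrite // eq_sym.
by move=> _ _ /(add_pow2_inj xy uv)[/val_inj/enum_rank_inj-> /val_inj/enum_rank_inj->].
Qed.

(* The least element of the sum at an edge xy is 2^x + 2^y, which determines {x, y}. *)
Definition coloring_label c z : {fset nat} :=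
  if c z then [fset vertex_weight z] else [fset vertex_weight z; (vertex_weight z).+1].

Lemma coloring_label_min c z : vertex_weight z \in coloring_label c z.
Proof. by rewrite /coloring_label; case: (c z); rewrite !inE eqxx. Qed.

Lemma coloring_label_ge c z k : k \in coloring_label c z -> vertex_weight z <= k.
Proof.
rewrite /coloring_label; case: (c z); rewrite !inE; first by move/eqP->.
by case/orP=> /eqP->.
Qed.

Lemma coloring_label_card c z : #|` coloring_label c z| = if c z then 1 else 2.
Proof. by rewrite /coloring_label; case: (c z); rewrite ?cardfs1 ?cardfs2 ?neq_ltn ?ltnSn. Qed.

Lemma coloring_label_sum_card c x y : c x || c y ->
  #|` sumset (coloring_label c x) (coloring_label c y)| = if c x && c y then 1 else 2.
Proof.
rewrite /coloring_label; case: (c x); case: (c y) => //= _;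
  by rewrite ?sumset1 ?sumset1_shift 1?sumsetC ?sumset1_shift ?cardfs1 ?cardfs2 ?neq_ltn ?ltnSn.
Qed.

Lemma coloring_label_sum_min c x y :
  {in sumset (coloring_label c x) (coloring_label c y), forall k,
    (vertex_weight x + vertex_weight y <= k)%N} /\
  (vertex_weight x + vertex_weight y)%N \in sumset (coloring_label c x) (coloring_label c y).
Proof.
split; last by apply/sumsetP; exists (vertex_weight x); rewrite ?coloring_label_min //;
  exists (vertex_weight y); rewrite ?coloring_label_min.
by move=> _ /sumsetP[a /coloring_label_ge xa [b /coloring_label_ge yb ->]]; apply: leq_add.
Qed.

Lemma coloring_label_weak_IASI e c : irreflexive e -> sparing_coloring e c ->
  weak_IASI e (coloring_label c).
Proof.
move=> irr [cover _ _]; split; [split|].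
- move=> x y E; apply: enum_rank_inj; apply: val_inj; apply: (@expnI 2) => //.
  apply/anti_leq/andP; split; apply: (@coloring_label_ge c).
    by rewrite E coloring_label_min.
  by rewrite -E coloring_label_min.
- move=> x y u v exy euv E.
  have [minxy inxy] := coloring_label_sum_min c x y.
  have [minuv inuv] := coloring_label_sum_min c u v.
  rewrite -E in minuv inuv.
  apply: vertex_weight_sum_inj.
  + by apply: contraTneq exy => ->; rewrite irr.
  + by apply: contraTneq euv => ->; rewrite irr.
  by apply/anti_leq; rewrite minxy ?minuv.
- move=> x y exy; rewrite coloring_label_sum_card ?cover // !coloring_label_card.
  by have := cover x y exy; case: (c x); case: (c y).
Qed.

Lemma mono_indexed_coloring_label e c E : sparing_coloring e c ->
  E \in mono_indexed_edges e (coloring_label c) ->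
  exists x y, [/\ e x y, E = [set x; y] & [set x; y] \subset c].
Proof.
move=> [cover _ _] /imset2P[x y _]; rewrite inE => /andP[_ /andP[exy]] mono ->.
exists x, y; split=> //; rewrite subset2.
by move: mono; rewrite coloring_label_sum_card ?cover //; case: (_ && _).
Qed.

Lemma mono_coloring_label_le_num_odd_cycles e c : sparing_coloring e c ->
  #|mono_indexed_edges e (coloring_label c)| <= num_odd_cycles e.
Proof.
move=> col; have [_ odd_pair one_pair] := col; rewrite /num_odd_cycles.
apply: (card_le_rel (R := fun (E : {set T}) (X : {set {set T}}) => E \in X)).
  move=> E /(mono_indexed_coloring_label col)[x [y [exy -> cxy]]].
  move: cxy; rewrite subset2 => /andP[cx cy].
  have [C [sC oC] xyC] := odd_pair x y exy cx cy.
  by exists (cycle_edges C) => //; rewrite inE; apply/decPP; exists C.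
move=> E E' X /(mono_indexed_coloring_label col)[x [y [_ -> cxy]]].
move=> /(mono_indexed_coloring_label col)[x' [y' [_ -> cxy']]].
rewrite inE => /decPP[C [sC oC ->]] xyC xyC'.
exact: one_pair (conj sC oC) _ _ xyC xyC' cxy cxy'.
Qed.

End Labelling.

Theorem theorem2p24 (T : finType) (e : rel T) :
  simple_graph e -> cactus e ->
  is_sparing_number e (num_odd_cycles e).
Proof.
move=> [e_sym e_irr] [_ e_cac].
have [c col] : exists c, sparing_coloring e c.
  case: (pickP (@predT T)) => [w _ | T0].
    by have [c col _] := exists_sparing_coloring e_sym e_irr e_cac w true; exists c.
  by exists predT; apply: sparing_coloring_edgeless => x; have := T0 x.
have lower f : weak_IASI e f -> num_odd_cycles e <= #|mono_indexed_edges e f|.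
  exact: num_odd_cycles_le_mono.
split=> [|f /lower //]; exists (coloring_label c).
split; first exact: coloring_label_weak_IASI.
apply/eqP; rewrite eqn_leq mono_coloring_label_le_num_odd_cycles //=.
exact/lower/coloring_label_weak_IASI.
Qed.
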